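(* Let $\mathscr{M}$ be a class of monomorphisms in a cotensored $\mathscr{V}$-category $\mathscr{B}$. Suppose that (i) arbitrary (class-indexed) intersections of $\mathscr{M}$-morphisms exist in $\mathscr{B}$ and again lie in $\mathscr{M}$, (ii) pullbacks of $\mathscr{M}$-morphisms along arbitrary morphisms exist in $\mathscr{B}$ and again lie in $\mathscr{M}$, (iii) $\mathscr{M}$ is closed under composition, and (iv) $\mathscr{M}$ is closed under cotensors. Then $\mathscr{M}^{\uparrow_\mathscr{V}}=\mathscr{M}^{\uparrow}$ and $(\mathscr{M}^{\uparrow},\mathscr{M})$ is a $\mathscr{V}$-factorization-system on $\mathscr{B}$.
   Context: $\mathscr{V}$ is a closed symmetric monoidal category; ordinary categories are not assumed locally small. Monomorphisms, intersections (wide pullbacks of class-indexed families of monos with common codomain) and pullbacks here are ordinary notions in the underlying category of $\mathscr{B}$. For $e:A_1\to A_2$, $m:B_1\to B_2$: $e\downarrow m$ means each commutative square $m\cdot u=v\cdot e$ has a unique diagonal $w$ with $w\cdot e=u$, $m\cdot w=v$; $e\downarrow_\mathscr{V} m$ means the square formed by $\mathscr{B}(A_2,m)$, $\mathscr{B}(A_1,m)$, $\mathscr{B}(e,B_1)$, $\mathscr{B}(e,B_2)$ is a pullback in $\mathscr{V}$. $\mathscr{M}^{\uparrow}$ ($\mathscr{M}^{\uparrow_\mathscr{V}}$) is the class of $e$ with $e\downarrow m$ ($e\downarrow_\mathscr{V} m$) for all $m\in\mathscr{M}$; similarly $\mathscr{E}^{\downarrow_\mathscr{V}}$. A $\mathscr{V}$-factorization-system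 is a pair $(\mathscr{E},\mathscr{M})$ with $\mathscr{E}^{\downarrow_\mathscr{V}}=\mathscr{M}$, $\mathscr{M}^{\uparrow_\mathscr{V}}=\mathscr{E}$, and every morphism assigned a factorization $m\cdot e$, $e\in\mathscr{E}$, $m\in\mathscr{M}$. $\mathscr{M}$ closed under cotensors: $[V,m]\in\mathscr{M}$ for $m\in\mathscr{M}$, $V\in\mathscr{V}$. *)

Set Implicit Arguments.
Unset Strict Implicit.

Record Cat : Type := {
  ob :> Type;
  hom : ob -> ob -> Type;
  idm : forall a, hom a a;
  cmp : forall a b c, hom b c -> hom a b -> hom a c;
  cmp_idl : forall a b (f : hom a b), cmp (idm b) f = f;
  cmp_idr : forall a b (f : hom a b), cmp f (idm a) = f;
  cmp_assoc : forall a b c d (h : hom c d) (g : hom b c) (f : hom a b),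
      cmp h (cmp g f) = cmp (cmp h g) f }.
Arguments hom {_} _ _.
Arguments idm {_} _.
Arguments cmp {_ _ _ _} _ _.

Notation "g ∘ f" := (cmp g f) (at level 40, left associativity).

Definition is_iso (C : Cat) (a b : C) (f : hom a b) : Prop :=
  exists g : hom b a, g ∘ f = idm a /\ f ∘ g = idm b.

Definition is_pullback (C : Cat) (p a b c : C) (f : hom a c) (g : hom b c)
    (pa : hom p a) (pb : hom p b) : Prop :=
  f ∘ pa = g ∘ pb /\
  forall (q : C) (qa : hom q a) (qb : hom q b), f ∘ qa = g ∘ qb ->
    exists! u : hom q p, pa ∘ u = qa /\ pb ∘ u = qb.

Record SMCC : Type := {
  Vc :> Cat;
  ten : Vc -> Vc -> Vc;
  tenm : forall a b c d, hom a b -> hom c d -> hom (ten a c) (ten b d);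
  tenm_id : forall a c, tenm (idm a) (idm c) = idm (ten a c);
  tenm_cmp : forall a b e c d f (g : hom b e) (g' : hom a b) (h : hom d f) (h' : hom c d),
      tenm (g ∘ g') (h ∘ h') = tenm g h ∘ tenm g' h';
  un : Vc;
  asc : forall a b c, hom (ten (ten a b) c) (ten a (ten b c));
  asc_inv : forall a b c, hom (ten a (ten b c)) (ten (ten a b) c);
  asc_iso1 : forall a b c, asc_inv a b c ∘ asc a b c = idm _;
  asc_iso2 : forall a b c, asc a b c ∘ asc_inv a b c = idm _;
  asc_nat : forall a a' b b' c c' (f : hom a a') (g : hom b b') (h : hom c c'),
      asc a' b' c' ∘ tenm (tenm f g) h = tenm f (tenm g h) ∘ asc a b c;
  lu : forall a, hom (ten un a) a;
  lu_inv : forall a, hom a (ten un a);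
  lu_iso1 : forall a, lu_inv a ∘ lu a = idm _;
  lu_iso2 : forall a, lu a ∘ lu_inv a = idm _;
  lu_nat : forall a b (f : hom a b), lu b ∘ tenm (idm un) f = f ∘ lu a;
  ru : forall a, hom (ten a un) a;
  ru_inv : forall a, hom a (ten a un);
  ru_iso1 : forall a, ru_inv a ∘ ru a = idm _;
  ru_iso2 : forall a, ru a ∘ ru_inv a = idm _;
  ru_nat : forall a b (f : hom a b), ru b ∘ tenm f (idm un) = f ∘ ru a;
  pentagon : forall a b c d,
      tenm (idm a) (asc b c d) ∘ asc a (ten b c) d ∘ tenm (asc a b c) (idm d)
      = asc a b (ten c d) ∘ asc (ten a b) c d;
  triangle : forall a b, tenm (idm a) (lu b) ∘ asc a un b = tenm (ru a) (idm b);
  sym : forall a b, hom (ten a b) (ten b a);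
  sym_nat : forall a a' b b' (f : hom a a') (g : hom b b'),
      sym a' b' ∘ tenm f g = tenm g f ∘ sym a b;
  sym_inv : forall a b, sym b a ∘ sym a b = idm _;
  hexagon : forall a b c,
      asc b c a ∘ sym a (ten b c) ∘ asc a b c
      = tenm (idm b) (sym a c) ∘ asc b a c ∘ tenm (sym a b) (idm c);
  ihom : Vc -> Vc -> Vc;
  ev : forall a b, hom (ten (ihom a b) a) b;
  cur : forall a b c, hom (ten c a) b -> hom c (ihom a b);
  ev_cur : forall a b c (f : hom (ten c a) b), ev a b ∘ tenm (cur f) (idm a) = f;
  cur_uniq : forall a b c (f : hom (ten c a) b) (g : hom c (ihom a b)),
      ev a b ∘ tenm g (idm a) = f -> g = cur f }.
Arguments ten {_} _ _.
Arguments tenm {_ _ _ _ _} _ _.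
Arguments un {_}.
Arguments asc {_} _ _ _.
Arguments lu {_} _.
Arguments lu_inv {_} _.
Arguments ru {_} _.
Arguments ru_inv {_} _.
Arguments sym {_} _ _.
Arguments ihom {_} _ _.
Arguments ev {_} _ _.
Arguments cur {_ _ _ _} _.

Record VCat (V : SMCC) : Type := {
  vob :> Type;
  vhom : vob -> vob -> V;
  vcomp : forall a b c, hom (ten (vhom b c) (vhom a b)) (vhom a c);
  vid : forall a, hom un (vhom a a);
  vassoc : forall a b c d,
      vcomp a b d ∘ tenm (vcomp b c d) (idm _)
      = vcomp a c d ∘ tenm (idm _) (vcomp a b c) ∘ asc _ _ _;
  vunit_l : forall a b, vcomp a b b ∘ tenm (vid b) (idm _) = lu _;
  vunit_r : forall a b, vcomp a a b ∘ tenm (idm _) (vid a) = ru _ }.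
Arguments vhom {_ _} _ _.
Arguments vcomp {_ _} _ _ _.
Arguments vid {_ _} _.

Section Underlying.
Variables (V : SMCC) (B : VCat V).

(** Underlying ordinary category B_0: B_0(a,b) = V_0(I, B(a,b)). *)
Definition uhom (a b : B) : Type := hom (@un V) (vhom a b).
Definition uid (a : B) : uhom a a := vid a.
Definition ucomp (a b c : B) (g : uhom b c) (f : uhom a b) : uhom a c :=
  vcomp a b c ∘ tenm g f ∘ lu_inv un.

Definition postm (a : B) (b1 b2 : B) (m : uhom b1 b2) :
    hom (vhom a b1) (vhom a b2) :=
  vcomp a b1 b2 ∘ tenm m (idm _) ∘ lu_inv _.
Definition prem (a1 a2 : B) (e : uhom a1 a2) (b : B) :
    hom (vhom a2 b) (vhom a1 b) :=
  vcomp a1 a2 b ∘ tenm (idm _) e ∘ ru_inv _.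

Definition is_mono (b c : B) (m : uhom b c) : Prop :=
  forall (x : B) (u v : uhom x b), ucomp m u = ucomp m v -> u = v.

Definition is_upullback (p a b c : B) (f : uhom a c) (g : uhom b c)
    (pa : uhom p a) (pb : uhom p b) : Prop :=
  ucomp f pa = ucomp g pb /\
  forall (q : B) (qa : uhom q a) (qb : uhom q b), ucomp f qa = ucomp g qb ->
    exists! u : uhom q p, ucomp pa u = qa /\ ucomp pb u = qb.

(** Intersection (wide pullback in B_0) of a family [ms i : bs i -> c],
    indexed by an arbitrary type [I] (class-indexed), with cone [ps], [p]. *)
Definition is_intersection (I : Type) (bs : I -> B) (c : B)
    (ms : forall i, uhom (bs i) c) (p0 : B) (ps : forall i, uhom p0 (bs i))
    (p : uhom p0 c) : Prop :=
  (forall i, ucomp (ms i) (ps i) = p) /\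
  forall (q : B) (qs : forall i, uhom q (bs i)) (qm : uhom q c),
    (forall i, ucomp (ms i) (qs i) = qm) ->
    exists! u : uhom q p0, (forall i, ucomp (ps i) u = qs i) /\ ucomp p u = qm.

Definition MorClass : Type := forall a b : B, uhom a b -> Prop.

Definition orth (a1 a2 b1 b2 : B) (e : uhom a1 a2) (m : uhom b1 b2) : Prop :=
  forall (u : uhom a1 b1) (v : uhom a2 b2), ucomp m u = ucomp v e ->
    exists! w : uhom a2 b1, ucomp w e = u /\ ucomp m w = v.

Definition vorth (a1 a2 b1 b2 : B) (e : uhom a1 a2) (m : uhom b1 b2) : Prop :=
  is_pullback (postm a1 m) (prem e b2) (prem e b1) (postm a2 m).

Definition up (M : MorClass) : MorClass :=
  fun a1 a2 e => forall b1 b2 (m : uhom b1 b2), M b1 b2 m -> orth e m.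
Definition upV (M : MorClass) : MorClass :=
  fun a1 a2 e => forall b1 b2 (m : uhom b1 b2), M b1 b2 m -> vorth e m.
Definition downV (E : MorClass) : MorClass :=
  fun b1 b2 m => forall a1 a2 (e : uhom a1 a2), E a1 a2 e -> vorth e m.

Definition is_VFS (E M : MorClass) : Prop :=
  (forall a b (m : uhom a b), downV E m <-> M a b m) /\
  (forall a b (e : uhom a b), upV M e <-> E a b e) /\
  (forall a b (f : uhom a b), exists (c : B) (e : uhom a c) (m : uhom c b),
      E a c e /\ M c b m /\ ucomp m e = f).

End Underlying.

Definition cot_comparison (V : SMCC) (B : VCat V) (X : V) (P c : B)
    (cu : hom X (vhom P c)) (a : B) : hom (vhom a P) (ihom X (vhom a c)) :=
  cur (vcomp a P c ∘ tenm cu (idm _) ∘ sym (vhom a P) X).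

Record Cotensors (V : SMCC) (B : VCat V) : Type := {
  cot : V -> B -> B;
  cot_c : forall (X : V) (c : B), hom X (vhom (cot X c) c);
  cot_univ : forall (X : V) (c a : B), is_iso (cot_comparison (cot_c X c) a) }.
Arguments cot {_ _} _ _ _.
Arguments cot_c {_ _} _ _ _.

(** [f] is the morphism [X,m] : [X,c1] -> [X,c2] induced by [m : c1 -> c2],
    i.e. it corresponds under the cotensor isomorphism to
    X --cu--> B([X,c1],c1) --B([X,c1],m)--> B([X,c1],c2). *)
Definition is_cot_map (V : SMCC) (B : VCat V) (T : Cotensors B) (X : V)
    (c1 c2 : B) (m : uhom c1 c2) (f : uhom (cot T X c1) (cot T X c2)) : Prop :=
  cot_comparison (cot_c T X c2) (cot T X c1) ∘ f
  = cur (postm (cot T X c1) m ∘ cot_c T X c1 ∘ lu X).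
Arguments is_cot_map {V B} T X {c1 c2} m f.

(* An M-morphism m is V-orthogonal to e as soon as e is orthogonal, in the
   underlying category, to every cotensor [X,m]: maps X -> B(a,b) correspond
   to maps a -> [X,b], and under this correspondence a cone over the
   V-square of (e, m) becomes a commutative square of e against [X,m].  Since
   M is closed under cotensors, M^(up_V) = M^(up).  A morphism f : a -> b then
   factors as f = p e where p is the intersection of all M-subobjects of b
   through which f factors; e is orthogonal to M because, for a square
   m u = v e, pulling m back along v yields one more M-subobject through which
   f factors, which p is contained in. *)
From Stdlib Require Import Setoid.

Lemma cmp_eq_r {C : Cat} {a b c : C} (x : hom a b) (f g : hom b c) :
  f = g -> f ∘ x = g ∘ x.
Proof. intros ->; reflexivity. Qed.

Lemma split_epi_cancel {C : Cat} {a b c : C} {f g : hom b c} {k : hom a b}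
    {k' : hom b a} :
  k ∘ k' = idm b -> f ∘ k = g ∘ k -> f = g.
Proof.
  intros H E. rewrite <- (cmp_idr f), <- (cmp_idr g), <- H, !cmp_assoc, E.
  reflexivity.
Qed.

Lemma split_mono_cancel {C : Cat} {a b c : C} {f g : hom a b} {k : hom b c}
    {k' : hom c b} :
  k' ∘ k = idm b -> k ∘ f = k ∘ g -> f = g.
Proof.
  intros H E. rewrite <- (cmp_idl f), <- (cmp_idl g), <- H, <- !cmp_assoc, E.
  reflexivity.
Qed.

(* Composites are kept right-associated; [chain_rewrite H] rewrites with
   [H : l = r] where [l] occurs as a sub-chain of such a composite. *)
Ltac reassoc := repeat rewrite <- cmp_assoc.
Ltac chain_rewrite H :=
  let Hx := fresh in
  pose proof (fun d x => @cmp_eq_r _ d _ _ x _ _ H) as Hx;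
  simpl in Hx; setoid_rewrite <- cmp_assoc in Hx;
  first [ rewrite Hx
        | let H2 := fresh in
          pose proof H as H2; repeat rewrite <- cmp_assoc in H2;
          rewrite H2; clear H2 ];
  clear Hx; reassoc.
Ltac chain_rewrite_rev H := chain_rewrite (eq_sym H).

Section Monoidal.
Context {V : SMCC}.

Lemma tenm_cmpR {a b c d e : V} (h : hom d e) (g : hom b c) (f : hom a b) :
  tenm h (g ∘ f) = tenm (idm e) g ∘ tenm h f.
Proof. rewrite <- tenm_cmp, cmp_idl. reflexivity. Qed.
Lemma tenm_cmpR' {a b c d e : V} (h : hom d e) (g : hom b c) (f : hom a b) :
  tenm h (g ∘ f) = tenm h g ∘ tenm (idm d) f.
Proof. rewrite <- tenm_cmp, cmp_idr. reflexivity. Qed.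
Lemma tenm_cmpL {a b c d e : V} (h : hom d e) (g : hom b c) (f : hom a b) :
  tenm (g ∘ f) h = tenm g (idm e) ∘ tenm f h.
Proof. rewrite <- tenm_cmp, cmp_idl. reflexivity. Qed.
Lemma tenm_cmpL' {a b c d e : V} (h : hom d e) (g : hom b c) (f : hom a b) :
  tenm (g ∘ f) h = tenm g h ∘ tenm f (idm d).
Proof. rewrite <- tenm_cmp, cmp_idr. reflexivity. Qed.
Lemma tenm_split {a b c d : V} (f : hom a b) (g : hom c d) :
  tenm f g = tenm f (idm d) ∘ tenm (idm a) g.
Proof. rewrite <- tenm_cmp, cmp_idl, cmp_idr. reflexivity. Qed.
Lemma tenm_split' {a b c d : V} (f : hom a b) (g : hom c d) :
  tenm f g = tenm (idm b) g ∘ tenm f (idm c).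
Proof. rewrite <- tenm_cmp, cmp_idl, cmp_idr. reflexivity. Qed.

Lemma lu_inv_nat {a b : V} (f : hom a b) :
  lu_inv b ∘ f = tenm (idm un) f ∘ lu_inv a.
Proof.
  rewrite <- (cmp_idr (lu_inv b ∘ f)), <- (lu_iso2 a).
  reassoc. chain_rewrite_rev (lu_nat f). chain_rewrite (lu_iso1 b).
  apply cmp_idl.
Qed.

Lemma ru_inv_nat {a b : V} (f : hom a b) :
  ru_inv b ∘ f = tenm f (idm un) ∘ ru_inv a.
Proof.
  rewrite <- (cmp_idr (ru_inv b ∘ f)), <- (ru_iso2 a).
  reassoc. chain_rewrite_rev (ru_nat f). chain_rewrite (ru_iso1 b).
  apply cmp_idl.
Qed.

Lemma tenm_idl_inj {a b : V} (f g : hom a b) :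
  tenm (idm un) f = tenm (idm un) g -> f = g.
Proof.
  intro H. rewrite <- (cmp_idr f), <- (cmp_idr g), <- (lu_iso2 a).
  reassoc. chain_rewrite_rev (lu_nat f). chain_rewrite_rev (lu_nat g).
  rewrite H. reflexivity.
Qed.

Lemma tenm_idr_inj {a b : V} (f g : hom a b) :
  tenm f (idm un) = tenm g (idm un) -> f = g.
Proof.
  intro H. rewrite <- (cmp_idr f), <- (cmp_idr g), <- (ru_iso2 a).
  reassoc. chain_rewrite_rev (ru_nat f). chain_rewrite_rev (ru_nat g).
  rewrite H. reflexivity.
Qed.

(* Kelly's coherence lemmas, deduced from the pentagon and the triangle. *)
Lemma lu_ten_asc (a b : V) : lu (ten a b) ∘ asc un a b = tenm (lu a) (idm b).
Proof.
  apply tenm_idl_inj.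
  set (k := asc un (ten un a) b ∘ tenm (asc un un a) (idm b)).
  set (k' := tenm (asc_inv un un a) (idm b) ∘ asc_inv un (ten un a) b).
  assert (Hk : k ∘ k' = idm _).
  { unfold k, k'. reassoc.
    chain_rewrite_rev (tenm_cmpL (idm b) (asc un un a) (asc_inv un un a)).
    rewrite asc_iso2, tenm_id, cmp_idl. apply asc_iso2. }
  apply (split_epi_cancel Hk). unfold k.
  rewrite tenm_cmpR. reassoc.
  chain_rewrite (pentagon un un a b). chain_rewrite (triangle un (ten a b)).
  rewrite <- (tenm_id a b). chain_rewrite_rev (asc_nat (ru un) (idm a) (idm b)).
  rewrite <- (triangle un a), tenm_cmpL. reassoc.
  chain_rewrite_rev (asc_nat (idm un) (lu a) (idm b)). reflexivity.
Qed.

Lemma lu_un_ten_lu : tenm (idm un) (lu (@un V)) = lu (ten un un).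
Proof. apply (split_mono_cancel (lu_iso1 un)). rewrite lu_nat. reflexivity. Qed.

Lemma ru_ten_ru (x : V) : tenm (ru x) (idm un) = ru (ten x un).
Proof. apply (split_mono_cancel (ru_iso1 x)). rewrite ru_nat. reflexivity. Qed.

Lemma lu_un_ru_un : lu (@un V) = ru un.
Proof.
  apply tenm_idr_inj. rewrite <- lu_ten_asc, <- triangle, lu_un_ten_lu.
  reflexivity.
Qed.

Lemma ru_un_inv : ru_inv (@un V) = lu_inv un.
Proof.
  rewrite <- (cmp_idr (ru_inv un)), <- (lu_iso2 un), lu_un_ru_un, cmp_assoc,
    ru_iso1, cmp_idl.
  reflexivity.
Qed.

Lemma ru_sym (a : V) : ru a = lu a ∘ sym a un.
Proof.
  apply tenm_idr_inj.
  apply (split_mono_cancel (sym_inv a un)).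
  rewrite <- triangle. reassoc. chain_rewrite (sym_nat (idm a) (lu un)).
  chain_rewrite_rev (lu_ten_asc un a). chain_rewrite (hexagon a un un).
  chain_rewrite (lu_nat (sym a un)). chain_rewrite (lu_ten_asc a un).
  rewrite tenm_cmpL. reflexivity.
Qed.

Lemma sym_lu_inv (x : V) : sym un x ∘ lu_inv x = ru_inv x.
Proof.
  assert (lu_ru : lu x = ru x ∘ sym un x).
  { rewrite ru_sym. reassoc. rewrite sym_inv, cmp_idr. reflexivity. }
  rewrite <- (cmp_idl (sym un x ∘ lu_inv x)), <- (ru_iso1 x). reassoc.
  chain_rewrite_rev lu_ru. rewrite lu_iso2, cmp_idr. reflexivity.
Qed.

Lemma asc_un_l (a b : V) : asc un a b = lu_inv (ten a b) ∘ tenm (lu a) (idm b).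
Proof. rewrite <- lu_ten_asc, cmp_assoc, lu_iso1, cmp_idl. reflexivity. Qed.

Lemma asc_un_un_lu_inv :
  asc (@un V) un un ∘ (tenm (lu_inv un) (idm un) ∘ lu_inv un)
  = tenm (idm un) (lu_inv un) ∘ lu_inv un.
Proof.
  rewrite asc_un_l. reassoc.
  chain_rewrite_rev (tenm_cmpL (idm un) (lu (@un V)) (lu_inv un)).
  rewrite lu_iso2, tenm_id, cmp_idl, lu_inv_nat. reflexivity.
Qed.

Lemma asc_ru_inv (x : V) :
  asc x un un ∘ ru_inv (ten x un) = tenm (idm x) (lu_inv un).
Proof.
  assert (Hiso : tenm (idm x) (lu_inv un) ∘ tenm (idm x) (lu un) = idm _).
  { rewrite <- tenm_cmpR, lu_iso1, tenm_id. reflexivity. }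
  apply (split_mono_cancel Hiso).
  rewrite cmp_assoc, triangle, ru_ten_ru, ru_iso2, <- tenm_cmpR, lu_iso2, tenm_id.
  reflexivity.
Qed.

Lemma asc_un_mid (x : V) :
  lu_inv (ten x un) ∘ ru_inv x = asc un x un ∘ (ru_inv (ten un x) ∘ lu_inv x).
Proof.
  rewrite asc_un_l. reassoc. chain_rewrite_rev (ru_inv_nat (lu x)).
  rewrite lu_iso2, cmp_idr. reflexivity.
Qed.

End Monoidal.

Section Underlying.
Context {V : SMCC} {B : VCat V}.

Lemma ucomp_assoc (a b c d : B) (h : uhom c d) (g : uhom b c) (f : uhom a b) :
  ucomp h (ucomp g f) = ucomp (ucomp h g) f.
Proof.
  unfold ucomp. reassoc.
  rewrite (tenm_cmpR h (vcomp a b c)), (tenm_cmpR' h (tenm g f)).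
  rewrite (tenm_cmpL f (vcomp b c d)), (tenm_cmpL' f (tenm h g)). reassoc.
  chain_rewrite (vassoc a b c d). chain_rewrite (asc_nat h g f).
  rewrite asc_un_un_lu_inv. reflexivity.
Qed.

Lemma ucomp_idl (a b : B) (f : uhom a b) : ucomp (uid b) f = f.
Proof.
  unfold ucomp, uid. rewrite tenm_split. reassoc.
  chain_rewrite (vunit_l a b). chain_rewrite (lu_nat f).
  rewrite lu_iso2, cmp_idr. reflexivity.
Qed.

Lemma ucomp_idr (a b : B) (f : uhom a b) : ucomp f (uid a) = f.
Proof.
  unfold ucomp, uid. rewrite tenm_split'. reassoc.
  chain_rewrite (vunit_r a b). chain_rewrite (ru_nat f).
  rewrite <- lu_un_ru_un, lu_iso2, cmp_idr. reflexivity.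
Qed.

Lemma postm_uhom (a b1 b2 : B) (m : uhom b1 b2) (u : uhom a b1) :
  postm a m ∘ u = ucomp m u.
Proof.
  unfold postm, ucomp. reassoc. chain_rewrite (lu_inv_nat u).
  chain_rewrite_rev (tenm_split m u). reflexivity.
Qed.

Lemma prem_uhom (a1 a2 b : B) (e : uhom a1 a2) (g : uhom a2 b) :
  prem e b ∘ g = ucomp g e.
Proof.
  unfold prem, ucomp. reassoc. chain_rewrite (ru_inv_nat g).
  chain_rewrite_rev (tenm_split' g e). rewrite ru_un_inv. reflexivity.
Qed.

Lemma prem_ucomp (a' a c b : B) (g : uhom a c) (f : uhom a' a) :
  prem (ucomp g f) b = prem f b ∘ prem g b.
Proof.
  unfold prem, ucomp. reassoc.
  rewrite (tenm_cmpR _ (vcomp a' a c)), (tenm_cmpR _ (tenm g f)). reassoc.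
  chain_rewrite (ru_inv_nat (vcomp a c b)).
  chain_rewrite_rev (tenm_split' (vcomp a c b) f).
  chain_rewrite (ru_inv_nat (tenm (idm (vhom c b)) g)).
  rewrite (tenm_split (vcomp a c b) f). reassoc.
  chain_rewrite_rev (tenm_split' (tenm (idm (vhom c b)) g) f).
  chain_rewrite (vassoc a' a c b). chain_rewrite (asc_nat (idm (vhom c b)) g f).
  chain_rewrite (asc_ru_inv (vhom c b)). reflexivity.
Qed.

Lemma postm_prem (a1 a2 b1 b2 : B) (e : uhom a1 a2) (m : uhom b1 b2) :
  postm a1 m ∘ prem e b1 = prem e b2 ∘ postm a2 m.
Proof.
  unfold prem, postm. reassoc.
  chain_rewrite (lu_inv_nat (vcomp a1 a2 b1)).
  chain_rewrite_rev (tenm_split m (vcomp a1 a2 b1)).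
  rewrite (tenm_split' m (vcomp a1 a2 b1)). reassoc.
  chain_rewrite (lu_inv_nat (tenm (idm (vhom a2 b1)) e)).
  chain_rewrite_rev (tenm_split m (tenm (idm (vhom a2 b1)) e)).
  chain_rewrite (ru_inv_nat (vcomp a2 b1 b2)).
  chain_rewrite_rev (tenm_split' (vcomp a2 b1 b2) e).
  rewrite (tenm_split (vcomp a2 b1 b2) e). reassoc.
  chain_rewrite (ru_inv_nat (tenm m (idm (vhom a2 b1)))).
  chain_rewrite_rev (tenm_split' (tenm m (idm (vhom a2 b1))) e).
  chain_rewrite (vassoc a1 a2 b1 b2). chain_rewrite (asc_nat m (idm (vhom a2 b1)) e).
  rewrite asc_un_mid. reflexivity.
Qed.

Lemma vorth_orth {a1 a2 b1 b2 : B} {e : uhom a1 a2} {m : uhom b1 b2} :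
  vorth e m -> orth e m.
Proof.
  intros [_ Hpb] u v Huv.
  destruct (Hpb un u v) as [w [[H1 H2] Hw]].
  { rewrite postm_uhom, prem_uhom. exact Huv. }
  rewrite prem_uhom in H1. rewrite postm_uhom in H2.
  exists w. split; [split; assumption|].
  intros w' [H1' H2']. apply Hw. rewrite prem_uhom, postm_uhom. split; assumption.
Qed.

End Underlying.

Section Cotensor.
Context {V : SMCC} {B : VCat V} (T : Cotensors B).

(* The bijection B_0(a, [X,b]) ≅ V_0(X, B(a,b)). *)
Definition cot_transpose {X : V} {a b : B} (h : uhom a (cot T X b)) :
    hom X (vhom a b) :=
  prem h b ∘ cot_c T X b.

Lemma cot_transposeE {X : V} {a b : B} (h : uhom a (cot T X b)) :
  ev _ _ ∘ tenm (cot_comparison (cot_c T X b) a ∘ h) (idm X) ∘ lu_inv X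
  = cot_transpose h.
Proof.
  unfold cot_transpose, cot_comparison, prem. reassoc.
  rewrite (tenm_cmpL _ _ h). reassoc.
  chain_rewrite (ev_cur (vcomp a (cot T X b) b ∘ (tenm (cot_c T X b) (idm _)
                                                  ∘ sym (vhom a (cot T X b)) X))).
  chain_rewrite (sym_nat h (idm X)).
  chain_rewrite_rev (tenm_split (cot_c T X b) h). rewrite sym_lu_inv.
  chain_rewrite (ru_inv_nat (cot_c T X b)).
  chain_rewrite_rev (tenm_split' (cot_c T X b) h). reflexivity.
Qed.

Lemma cot_transpose_inj {X : V} {a b : B} (h h' : uhom a (cot T X b)) :
  cot_transpose h = cot_transpose h' -> h = h'.
Proof.
  rewrite <- !cot_transposeE. intro E.
  assert (Eev : ev _ _ ∘ tenm (cot_comparison (cot_c T X b) a ∘ h) (idm X)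
              = ev _ _ ∘ tenm (cot_comparison (cot_c T X b) a ∘ h') (idm X)).
  { exact (split_epi_cancel (lu_iso1 X) E). }
  destruct (cot_univ T X b a) as [g [Hg _]].
  apply (split_mono_cancel Hg).
  rewrite (cur_uniq Eev). symmetry. apply cur_uniq. reflexivity.
Qed.

Lemma cot_transpose_surj {X : V} {a b : B} (k : hom X (vhom a b)) :
  exists h : uhom a (cot T X b), cot_transpose h = k.
Proof.
  destruct (cot_univ T X b a) as [g [_ Hg]].
  exists (g ∘ cur (k ∘ lu X)).
  rewrite <- cot_transposeE, cmp_assoc, Hg, cmp_idl, ev_cur. reassoc.
  rewrite lu_iso2, cmp_idr. reflexivity.
Qed.

Lemma cot_transpose_ucomp {X : V} {a' a b : B} (g : uhom a (cot T X b))
    (f : uhom a' a) :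
  cot_transpose (ucomp g f) = prem f b ∘ cot_transpose g.
Proof. unfold cot_transpose. rewrite prem_ucomp. reassoc. reflexivity. Qed.

Lemma cot_map_exists (X : V) {c1 c2 : B} (m : uhom c1 c2) :
  exists f, is_cot_map T X m f.
Proof.
  destruct (cot_univ T X c2 (cot T X c1)) as [g [_ Hg]].
  exists (g ∘ cur (postm (cot T X c1) m ∘ cot_c T X c1 ∘ lu X)).
  unfold is_cot_map. rewrite cmp_assoc, Hg, cmp_idl. reflexivity.
Qed.

Lemma cot_transpose_cot_map {X : V} {a c1 c2 : B} {m : uhom c1 c2} {f}
    (g : uhom a (cot T X c1)) :
  is_cot_map T X m f -> cot_transpose (ucomp f g) = postm a m ∘ cot_transpose g.
Proof.
  intro Hf.
  assert (Hf' : cot_transpose f = postm (cot T X c1) m ∘ cot_c T X c1).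
  { rewrite <- cot_transposeE, Hf, ev_cur. reassoc.
    rewrite lu_iso2, cmp_idr. reflexivity. }
  rewrite cot_transpose_ucomp, Hf'. unfold cot_transpose.
  rewrite !cmp_assoc, postm_prem. reflexivity.
Qed.

Lemma orth_cot_maps_vorth (a1 a2 b1 b2 : B) (e : uhom a1 a2) (m : uhom b1 b2) :
  (forall X f, is_cot_map T X m f -> orth e f) -> vorth e m.
Proof.
  intros Horth. split; [apply postm_prem|].
  intros X qa qb Hq.
  destruct (cot_map_exists X m) as [f Hf].
  destruct (cot_transpose_surj qa) as [ga Hga].
  destruct (cot_transpose_surj qb) as [gb Hgb].
  assert (Hsq : ucomp f ga = ucomp gb e).
  { apply cot_transpose_inj.
    rewrite (cot_transpose_cot_map _ Hf), cot_transpose_ucomp, Hga, Hgb.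
    exact Hq. }
  destruct (Horth X f Hf ga gb Hsq) as [w [[Hw1 Hw2] Hw]].
  exists (cot_transpose w). split; [split|].
  - rewrite <- Hga, <- Hw1, cot_transpose_ucomp. reflexivity.
  - rewrite <- (cot_transpose_cot_map _ Hf), Hw2. exact Hgb.
  - intros k [Hk1 Hk2].
    destruct (cot_transpose_surj k) as [w' <-].
    f_equal. apply Hw. split; apply cot_transpose_inj.
    + rewrite cot_transpose_ucomp, Hk1. exact (eq_sym Hga).
    + rewrite (cot_transpose_cot_map _ Hf), Hk2. exact (eq_sym Hgb).
Qed.

End Cotensor.

Section MFactorization.
Context {V : SMCC} {B : VCat V} (M : MorClass B).

Hypothesis M_mono : forall (a b : B) (m : uhom a b), M a b m -> is_mono m.
Hypothesis M_intersection :
  forall (I : Type) (bs : I -> B) (c : B) (ms : forall i, uhom (bs i) c),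
    (forall i, M (bs i) c (ms i)) ->
    (exists (p0 : B) (ps : forall i, uhom p0 (bs i)) (p : uhom p0 c),
        is_intersection ms ps p) /\
    (forall (p0 : B) (ps : forall i, uhom p0 (bs i)) (p : uhom p0 c),
        is_intersection ms ps p -> M p0 c p).
Hypothesis M_pullback : forall (a b c : B) (f : uhom a c) (m : uhom b c), M b c m ->
  (exists (p : B) (pa : uhom p a) (pb : uhom p b), is_upullback f m pa pb) /\
  (forall (p : B) (pa : uhom p a) (pb : uhom p b),
      is_upullback f m pa pb -> M p a pa).
Hypothesis M_comp : forall (a b c : B) (m : uhom a b) (n : uhom b c),
  M a b m -> M b c n -> M a c (ucomp n m).

Definition is_M_image {a p0 b : B} (e : uhom a p0) (p : uhom p0 b) : Prop :=
  M p0 b p /\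
  forall (c : B) (m : uhom c b) (g : uhom a c), M c b m ->
    ucomp m g = ucomp p e -> exists k : uhom p0 c, ucomp m k = p /\ ucomp k e = g.

(* An isomorphism is an intersection of the empty family. *)
Lemma M_iso {a c : B} {e : uhom a c} {w : uhom c a} :
  ucomp w e = uid a -> ucomp e w = uid c -> M a c e.
Proof.
  intros Hwe Hew.
  set (bs := Empty_set_rect (fun _ => vob B)).
  set (ms := fun i => Empty_set_rect (fun i => uhom (bs i) c) i).
  destruct (M_intersection Empty_set bs c ms
              (fun i => Empty_set_rect (fun i => M (bs i) c (ms i)) i)) as [_ HM].
  apply (HM a (fun i => Empty_set_rect (fun i => uhom a (bs i)) i) e).
  split; [intros []|].
  intros q qs qm _. exists (ucomp w qm). split; [split; [intros []|]|].
  - rewrite ucomp_assoc, Hew, ucomp_idl. reflexivity.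
  - intros u [_ Hu]. rewrite <- Hu, ucomp_assoc, Hwe, ucomp_idl. reflexivity.
Qed.

(* The M-image is the intersection of all M-subobjects through which [f] factors. *)
Lemma M_image_exists {a b : B} (f : uhom a b) :
  exists (p0 : B) (e : uhom a p0) (p : uhom p0 b), is_M_image e p /\ ucomp p e = f.
Proof.
  set (I := {c : B & {m : uhom c b & {g : uhom a c | M c b m /\ ucomp m g = f}}}).
  set (ms := fun i : I => projT1 (projT2 i)).
  destruct (M_intersection I (fun i => projT1 i) b ms
              (fun i => proj1 (proj2_sig (projT2 (projT2 i)))))
    as [[p0 [ps [p Hp]]] HM].
  pose proof (HM p0 ps p Hp) as Mp.
  destruct Hp as [Hcone Huniv].
  destruct (Huniv a (fun i => proj1_sig (projT2 (projT2 i))) f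
              (fun i => proj2 (proj2_sig (projT2 (projT2 i))))) as [e [[He Hpe] _]].
  exists p0, e, p. split; [split; [exact Mp|]|exact Hpe].
  intros c m g Mm Hmg. rewrite Hpe in Hmg.
  set (i := existT _ c (existT _ m (exist _ g (conj Mm Hmg))) : I).
  exists (ps i). exact (conj (Hcone i) (He i)).
Qed.

(* Given a square [m u = v e], the pullback of [m] along [v] is one more
   M-subobject through which [p ∘ e] factors, and the M-image [p] is contained
   in it. *)
Lemma M_image_up {a p0 b : B} {e : uhom a p0} {p : uhom p0 b} :
  is_M_image e p -> up M e.
Proof.
  intros [Mp Hleast] b1 b2 m Mm u v Hsq.
  destruct (M_pullback _ _ _ v m Mm) as [[P [pa [pb Hpbk]]] HMpb].
  pose proof (HMpb P pa pb Hpbk) as Mpa.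
  destruct Hpbk as [Hcomm Hpbu].
  destruct (Hpbu a e u (eq_sym Hsq)) as [k [[Hk1 Hk2] _]].
  destruct (Hleast P (ucomp p pa) k (M_comp _ _ _ pa p Mpa Mp)) as [s [Hs Hse]].
  { rewrite <- ucomp_assoc, Hk1. reflexivity. }
  assert (Hpas : ucomp pa s = uid p0).
  { apply (M_mono _ _ p Mp). rewrite ucomp_assoc, Hs, ucomp_idr. reflexivity. }
  assert (Hdiag : ucomp m (ucomp pb s) = v).
  { rewrite ucomp_assoc, <- Hcomm, <- ucomp_assoc, Hpas, ucomp_idr. reflexivity. }
  exists (ucomp pb s). split; [split|].
  - rewrite <- ucomp_assoc, Hse. exact Hk2.
  - exact Hdiag.
  - intros w [_ Hw]. apply (M_mono _ _ m Mm). rewrite Hw, Hdiag. reflexivity.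
Qed.

Lemma up_M_factorization (a b : B) (f : uhom a b) :
  exists (c : B) (e : uhom a c) (m : uhom c b), up M e /\ M c b m /\ ucomp m e = f.
Proof.
  destruct (M_image_exists f) as [c [e [m [Himage Hf]]]].
  exists c, e, m. exact (conj (M_image_up Himage) (conj (proj1 Himage) Hf)).
Qed.

(* Factor [m = m' e]; the diagonal of [e] against [m'] in the square
   [m ∘ id = m' ∘ e] inverts [e]. *)
Lemma M_of_orth_up (a b : B) (m : uhom a b) :
  (forall a1 a2 (e : uhom a1 a2), up M e -> orth e m) -> M a b m.
Proof.
  intro Horth.
  destruct (up_M_factorization _ _ m) as [c [e [m' [He [Mm' Hm]]]]].
  destruct (Horth _ _ e He (uid a) m') as [w [[Hwe Hmw] _]].
  { rewrite ucomp_idr. symmetry. exact Hm. }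
  assert (Hew : ucomp e w = uid c).
  { apply (M_mono _ _ m' Mm'). rewrite ucomp_assoc, Hm, Hmw, ucomp_idr. reflexivity. }
  rewrite <- Hm. exact (M_comp _ _ _ e m' (M_iso Hwe Hew) Mm').
Qed.

End MFactorization.

Lemma upV_iff_up {V : SMCC} {B : VCat V} (T : Cotensors B) (M : MorClass B)
    (M_cot : forall (X : V) (c1 c2 : B) (m : uhom c1 c2)
        (f : uhom (cot T X c1) (cot T X c2)),
        M c1 c2 m -> is_cot_map T X m f -> M _ _ f)
    (a b : B) (e : uhom a b) :
  upV M e <-> up M e.
Proof.
  split.
  - intros He b1 b2 m Mm. exact (vorth_orth (He _ _ m Mm)).
  - intros He b1 b2 m Mm. apply (orth_cot_maps_vorth T).
    intros X f Hf. exact (He _ _ f (M_cot X _ _ m f Mm Hf)).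
Qed.

Theorem corollary7p3 (V : SMCC) (B : VCat V) (T : Cotensors B)
  (M : MorClass B)
  (Hmono : forall (a b : B) (m : uhom a b), M a b m -> is_mono m)
  (Hint : forall (I : Type) (bs : I -> B) (c : B) (ms : forall i, uhom (bs i) c),
      (forall i, M (bs i) c (ms i)) ->
      (exists (p0 : B) (ps : forall i, uhom p0 (bs i)) (p : uhom p0 c),
          is_intersection ms ps p) /\
      (forall (p0 : B) (ps : forall i, uhom p0 (bs i)) (p : uhom p0 c),
          is_intersection ms ps p -> M p0 c p))
  (Hpb : forall (a b c : B) (f : uhom a c) (m : uhom b c), M b c m ->
      (exists (p : B) (pa : uhom p a) (pb : uhom p b), is_upullback f m pa pb) /\
      (forall (p : B) (pa : uhom p a) (pb : uhom p b),
          is_upullback f m pa pb -> M p a pa))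
  (Hcomp : forall (a b c : B) (m : uhom a b) (n : uhom b c),
      M a b m -> M b c n -> M a c (ucomp n m))
  (Hcot : forall (X : V) (c1 c2 : B) (m : uhom c1 c2)
      (f : uhom (cot T X c1) (cot T X c2)),
      M c1 c2 m -> is_cot_map T X m f -> M _ _ f) :
  (forall (a b : B) (e : uhom a b), upV M e <-> up M e) /\
  is_VFS (up M) M.
Proof.
  pose proof (upV_iff_up T M Hcot) as HupV.
  split; [exact HupV|]. split; [|split].
  - intros a b m. split.
    + intro Hm. apply (M_of_orth_up M Hmono Hint Hpb Hcomp).
      intros a1 a2 e He. exact (vorth_orth (Hm _ _ e He)).
    + intros Mm a1 a2 e He. exact (proj2 (HupV _ _ e) He _ _ m Mm).
  - exact HupV.
  - exact (up_M_factorization M Hmono Hint Hpb Hcomp).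
Qed.
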